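(* Every marginally trapped meridian surface $\mathcal M'_m:z(u,v)=u\,l(v)+g(u)e_4$ (respectively $\mathcal M''_m:z(u,v)=u\,l(v)+g(u)e_1$), $u\in I\subset(0,\infty)$, has non-parallel mean curvature vector field, i.e. $DH$ does not vanish identically, where $D$ is the normal connection.
   Context: $\mathbb{R}^4_1$ is $\mathbb{R}^4$ with metric $\langle\cdot,\cdot\rangle$ of signature $(3,1)$ and orthonormal basis $e_1,\dots,e_4$, $\langle e_i,e_i\rangle=1$ ($i\le3$), $\langle e_4,e_4\rangle=-1$. For a spacelike surface, the normal connection $D$ is the normal component of the flat derivative of normal fields, and the mean curvature vector $H$ is half the trace of the second fundamental form; the surface is marginally trapped if $H\neq0$ and $\langle H,H\rangle=0$ everywhere. $\mathcal M'_m$: $l(v)$, $v\in J$, is an arc-length parametrized curve on the unit sphere $S^2(1)\subset\mathrm{span}\{e_1,e_2,e_3\}$, $g$ smooth with $|\dot g|<1$. $\mathcal M''_m$: $l(v)$, $v\in J$, is an arc-length parametrized spacelike curve on the de Sitter sphere $S^2_1(1)=\{V\in\mathrm{span}\{e_2,e_3,e_4\}:\langle V,V\rangle=1\}$, $g$ smooth. These are meridian surfaces on the rotational hypersurfaces obtained by rotating the curve $u\mapsto(u,g(u))$ about the timelike axis $Oe_4$, respectively the spacelike axis $Oe_1$. *)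

From Stdlib Require Import Reals ClassicalEpsilon.
Open Scope R_scope.

Record V4 := mkV { vc1 : R; vc2 : R; vc3 : R; vc4 : R }.

Definition vadd (x y : V4) : V4 :=
  mkV (vc1 x + vc1 y) (vc2 x + vc2 y) (vc3 x + vc3 y) (vc4 x + vc4 y).
Definition vscal (a : R) (x : V4) : V4 :=
  mkV (a * vc1 x) (a * vc2 x) (a * vc3 x) (a * vc4 x).
Definition vsub (x y : V4) : V4 := vadd x (vscal (-1) y).
Definition vzero : V4 := mkV 0 0 0 0.
Definition e1 : V4 := mkV 1 0 0 0.
Definition e4 : V4 := mkV 0 0 0 1.

Definition ip (x y : V4) : R :=
  vc1 x * vc1 y + vc2 x * vc2 y + vc3 x * vc3 y - vc4 x * vc4 y.

(** The derivative of f at x (chosen by Hilbert's epsilon; it is the genuine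
    derivative whenever f is differentiable at x). *)
Definition deriv (f : R -> R) (x : R) : R :=
  epsilon (inhabits 0) (fun l => derivable_pt_lim f x l).

Definition dvec (f : R -> V4) (x : R) : V4 :=
  mkV (deriv (fun t => vc1 (f t)) x) (deriv (fun t => vc2 (f t)) x)
      (deriv (fun t => vc3 (f t)) x) (deriv (fun t => vc4 (f t)) x).

Definition is_open_interval (I : R -> Prop) : Prop :=
  (exists x, I x) /\
  (forall x y z, I x -> I z -> x <= y <= z -> I y) /\
  (forall x, I x -> exists eps, 0 < eps /\ forall y, Rabs (y - x) < eps -> I y).

Definition smooth_on (P : R -> Prop) (f : R -> R) : Prop :=
  exists d : nat -> R -> R, (forall x, d O x = f x) /\
    forall n x, P x -> derivable_pt_lim (d n) x (d (S n) x).

Definition smooth_curve_on (P : R -> Prop) (l : R -> V4) : Prop :=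
  smooth_on P (fun t => vc1 (l t)) /\ smooth_on P (fun t => vc2 (l t)) /\
  smooth_on P (fun t => vc3 (l t)) /\ smooth_on P (fun t => vc4 (l t)).

Section Surface.
Variable z : R -> R -> V4.

Definition zu (u v : R) : V4 := dvec (fun t => z t v) u.
Definition zv (u v : R) : V4 := dvec (fun s => z u s) v.
Definition zuu (u v : R) : V4 := dvec (fun t => zu t v) u.
Definition zuv (u v : R) : V4 := dvec (fun s => zu u s) v.
Definition zvv (u v : R) : V4 := dvec (fun s => zv u s) v.

Definition cE (u v : R) : R := ip (zu u v) (zu u v).
Definition cF (u v : R) : R := ip (zu u v) (zv u v).
Definition cG (u v : R) : R := ip (zv u v) (zv u v).
Definition cW (u v : R) : R := cE u v * cG u v - cF u v * cF u v.

(** Orthogonal projection onto the tangent plane span{z_u, z_v}. *)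
Definition tang (u v : R) (X : V4) : V4 :=
  vadd (vscal ((cG u v * ip X (zu u v) - cF u v * ip X (zv u v)) / cW u v) (zu u v))
       (vscal ((cE u v * ip X (zv u v) - cF u v * ip X (zu u v)) / cW u v) (zv u v)).

Definition nrm (u v : R) (X : V4) : V4 := vsub X (tang u v X).

Definition h11 (u v : R) : V4 := nrm u v (zuu u v).
Definition h12 (u v : R) : V4 := nrm u v (zuv u v).
Definition h22 (u v : R) : V4 := nrm u v (zvv u v).

(** Mean curvature vector: half the trace of sigma w.r.t. the induced metric. *)
Definition Hvec (u v : R) : V4 :=
  vscal (1 / (2 * cW u v))
    (vadd (vsub (vscal (cG u v) (h11 u v)) (vscal (2 * cF u v) (h12 u v)))
          (vscal (cE u v) (h22 u v))).

Definition spacelike (dom : R -> R -> Prop) : Prop :=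
  forall u v, dom u v -> 0 < cE u v /\ 0 < cG u v /\ 0 < cW u v.

Definition marginally_trapped (dom : R -> R -> Prop) : Prop :=
  spacelike dom /\
  forall u v, dom u v -> Hvec u v <> vzero /\ ip (Hvec u v) (Hvec u v) = 0.

(** Normal connection applied to H along the coordinate fields. *)
Definition DuH (u v : R) : V4 := nrm u v (dvec (fun t => Hvec t v) u).
Definition DvH (u v : R) : V4 := nrm u v (dvec (fun s => Hvec u s) v).

Definition parallel_H (dom : R -> R -> Prop) : Prop :=
  forall u v, dom u v -> DuH u v = vzero /\ DvH u v = vzero.
End Surface.

Definition meridian1 (l : R -> V4) (g : R -> R) : R -> R -> V4 :=
  fun u v => vadd (vscal u (l v)) (vscal (g u) e4).
Definition meridian2 (l : R -> V4) (g : R -> R) : R -> R -> V4 :=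
  fun u v => vadd (vscal u (l v)) (vscal (g u) e1).

(* Both families are instances of one surface  z(u,v) = u l(v) + g(u) E0,
   where E0 is a unit vector with <E0,E0> = s, s^2 = 1 (E0 = e4, s = -1 for
   M'_m and E0 = e1, s = 1 for M''_m), and l is a unit-speed curve with
   <l,l> = 1 and <l,E0> = 0.  Writing T = l', N = l'', differentiating the
   constant products of the curve gives the Gram relations of (l, T, N, E0).
   From them the surface has E = 1 + s g'^2, F = 0, G = u^2, and
       H = a(u) l + n(u) N + c(u) E0    with   n(u) = 1/(2u).
   If D_{z_u} H = 0 then dH/du lies in span{z_u, z_v}; since n'(u) <> 0 this
   forces N = -l.  Then H = (a - n) l + c E0, and normality of H gives
   a - n = -s g' c, so <H,H> = s c^2 E = 0 forces c = 0 and H = 0,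
   contradicting marginal trappedness. *)

From Stdlib Require Import Reals Lra Psatz ClassicalEpsilon FunctionalExtensionality.
From Coquelicot Require Import Coquelicot.
Open Scope R_scope.

Lemma deriv_unique f x l : derivable_pt_lim f x l -> deriv f x = l.
Proof.
  intro Hl. unfold deriv.
  pose proof (epsilon_spec (inhabits 0) (fun l => derivable_pt_lim f x l)
                (ex_intro _ l Hl)) as Heps.
  eapply uniqueness_limite; eauto.
Qed.

Lemma derivable_pt_lim_local f h x l eps : 0 < eps ->
  (forall y, Rabs (y - x) < eps -> f y = h y) ->
  derivable_pt_lim h x l -> derivable_pt_lim f x l.
Proof.
  intros Heps Hfh Hd e He.
  destruct (Hd e He) as [d Hd'].
  assert (Hm : 0 < Rmin d eps) by (apply Rmin_pos; [apply cond_pos | lra]).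
  exists (mkposreal _ Hm). intros hh Hh0 Hhd. simpl in Hhd.
  rewrite (Hfh x) by (rewrite Rminus_diag, Rabs_R0; lra).
  rewrite (Hfh (x + hh)).
  - apply Hd'; auto. apply Rlt_le_trans with (1 := Hhd). apply Rmin_l.
  - replace (x + hh - x) with hh by ring.
    apply Rlt_le_trans with (1 := Hhd). apply Rmin_r.
Qed.

Definition open_set (P : R -> Prop) : Prop :=
  forall x, P x -> exists eps, 0 < eps /\ forall y, Rabs (y - x) < eps -> P y.

Lemma derivative_of_locally_const P f k x l : open_set P ->
  (forall y, P y -> f y = k) -> P x -> derivable_pt_lim f x l -> l = 0.
Proof.
  intros HP Hk Hx Hd. destruct (HP x Hx) as [eps [Heps Hball]].
  assert (H0 : derivable_pt_lim f x 0).
  { apply (derivable_pt_lim_local f (fun _ => k) x 0 eps Heps).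
    - intros; apply Hk, Hball; auto.
    - apply derivable_pt_lim_const. }
  eapply uniqueness_limite; eauto.
Qed.

Definition vderiv (f : R -> V4) (x : R) (A : V4) : Prop :=
  derivable_pt_lim (fun t => vc1 (f t)) x (vc1 A) /\
  derivable_pt_lim (fun t => vc2 (f t)) x (vc2 A) /\
  derivable_pt_lim (fun t => vc3 (f t)) x (vc3 A) /\
  derivable_pt_lim (fun t => vc4 (f t)) x (vc4 A).

Lemma dvec_local h f x A eps : 0 < eps ->
  (forall y, Rabs (y - x) < eps -> h y = f y) -> vderiv f x A -> dvec h x = A.
Proof.
  intros Heps Hh [H1 [H2 [H3 H4]]]. destruct A. unfold dvec. simpl in *.
  f_equal; apply deriv_unique; eapply derivable_pt_lim_local; eauto;
    intros; simpl; rewrite Hh; auto.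
Qed.

Lemma dvec_eq f x A : vderiv f x A -> dvec f x = A.
Proof. intro H. apply (dvec_local f f x A 1); auto; lra. Qed.

Lemma vderiv_ext f x A B : vderiv f x A -> A = B -> vderiv f x B.
Proof. intros H <-; exact H. Qed.

Lemma vderiv_add f g x A B : vderiv f x A -> vderiv g x B ->
  vderiv (fun t => vadd (f t) (g t)) x (vadd A B).
Proof.
  intros [A1 [A2 [A3 A4]]] [B1 [B2 [B3 B4]]]; repeat split; simpl;
    apply derivable_pt_lim_plus; auto.
Qed.

Lemma vderiv_scal (a : R -> R) f x a' A : derivable_pt_lim a x a' -> vderiv f x A ->
  vderiv (fun t => vscal (a t) (f t)) x (vadd (vscal a' (f x)) (vscal (a x) A)).
Proof.
  intros Ha [A1 [A2 [A3 A4]]]; repeat split; simpl;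
    apply (derivable_pt_lim_mult a (fun t => _ (f t))); auto.
Qed.

Lemma vderiv_const (C : V4) x : vderiv (fun _ => C) x vzero.
Proof. repeat split; simpl; apply derivable_pt_lim_const. Qed.

Lemma V4_ext x y :
  vc1 x = vc1 y -> vc2 x = vc2 y -> vc3 x = vc3 y -> vc4 x = vc4 y -> x = y.
Proof. destruct x, y; simpl; intros; subst; auto. Qed.

Ltac vext := apply V4_ext; simpl.

Lemma ip_addl x y w : ip (vadd x y) w = ip x w + ip y w. Proof. unfold ip; simpl; ring. Qed.
Lemma ip_addr x y w : ip w (vadd x y) = ip w x + ip w y. Proof. unfold ip; simpl; ring. Qed.
Lemma ip_scall a x w : ip (vscal a x) w = a * ip x w. Proof. unfold ip; simpl; ring. Qed.
Lemma ip_scalr a x w : ip w (vscal a x) = a * ip w x. Proof. unfold ip; simpl; ring. Qed.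
Lemma ip_sym x y : ip x y = ip y x. Proof. unfold ip; ring. Qed.
Lemma ip_zeror x : ip x vzero = 0. Proof. unfold ip; simpl; ring. Qed.

(* Expand inner products bilinearly and substitute the known values of the
   basic products available as hypotheses (in either argument order). *)
Ltac simpl_ip :=
  repeat rewrite ?ip_addl, ?ip_addr, ?ip_scall, ?ip_scalr;
  repeat match goal with
  | H : ip ?a ?b = _ |- context [ip ?a ?b] => rewrite H
  | H : ip ?a ?b = _ |- context [ip ?b ?a] => rewrite (ip_sym b a), H
  end.

Lemma vderiv_ip A B x A' B' : vderiv A x A' -> vderiv B x B' ->
  derivable_pt_lim (fun t => ip (A t) (B t)) x (ip A' (B x) + ip (A x) B').
Proof.
  intros [A1 [A2 [A3 A4]]] [B1 [B2 [B3 B4]]]. unfold ip.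
  replace (vc1 A' * vc1 (B x) + vc2 A' * vc2 (B x) + vc3 A' * vc3 (B x)
           - vc4 A' * vc4 (B x) +
           (vc1 (A x) * vc1 B' + vc2 (A x) * vc2 B' + vc3 (A x) * vc3 B'
           - vc4 (A x) * vc4 B'))
    with ((vc1 A' * vc1 (B x) + vc1 (A x) * vc1 B')
          + (vc2 A' * vc2 (B x) + vc2 (A x) * vc2 B')
          + (vc3 A' * vc3 (B x) + vc3 (A x) * vc3 B')
          - (vc4 A' * vc4 (B x) + vc4 (A x) * vc4 B')) by ring.
  apply (derivable_pt_lim_minus (fun t => _ + _ + _)).
  apply (derivable_pt_lim_plus (fun t => _ + _)).
  apply (derivable_pt_lim_plus (fun t => _)).
  all: apply (derivable_pt_lim_mult (fun t => _ (A t)) (fun t => _ (B t))); auto.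
Qed.

Lemma ip_deriv_of_const (J : R -> Prop) f g f' g' c v : open_set J ->
  (forall y, J y -> ip (f y) (g y) = c) -> J v ->
  vderiv f v f' -> vderiv g v g' -> ip f' (g v) + ip (f v) g' = 0.
Proof.
  intros HJ Hc Hv Hf Hg.
  exact (derivative_of_locally_const J _ c v _ HJ Hc Hv (vderiv_ip f g v f' g' Hf Hg)).
Qed.

Lemma nrm_zero_tangent z u v X : nrm z u v X = vzero ->
  exists al be, X = vadd (vscal al (zu z u v)) (vscal be (zv z u v)).
Proof.
  unfold nrm, tang.
  set (al := (_ / cW z u v)); set (be := (_ / cW z u v)).
  intro H. exists al, be.
  destruct X, (zu z u v), (zv z u v).
  unfold vsub, vadd, vscal, vzero in *; simpl in *.
  injection H; intros. f_equal; lra.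
Qed.

(** * The Frenet-type frame of a unit-speed curve *)

Record frame_relations (l t n e : V4) : Prop := {
  fr_ll : ip l l = 1;
  fr_lt : ip l t = 0;
  fr_tt : ip t t = 1;
  fr_ln : ip l n = -1;
  fr_tn : ip t n = 0;
  fr_le : ip l e = 0;
  fr_te : ip t e = 0;
  fr_ne : ip n e = 0 }.

Ltac frame_facts F := destruct F as [? ? ? ? ? ? ? ?].

Section CurveFrame.
(* [L n] is the n-th derivative of the curve l = L 0 on the open set J. *)
Variables (J : R -> Prop) (L : nat -> R -> V4) (E0 : V4).
Hypothesis J_open : open_set J.
Hypothesis L_deriv : forall n v, J v -> vderiv (L n) v (L (S n) v).
Hypothesis l_unit : forall v, J v -> ip (L 0 v) (L 0 v) = 1.
Hypothesis T_unit : forall v, J v -> ip (L 1 v) (L 1 v) = 1.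
Hypothesis l_perp : forall v, J v -> ip (L 0 v) E0 = 0.

Lemma lT_perp v : J v -> ip (L 0 v) (L 1 v) = 0.
Proof.
  intro Hv. pose proof (ip_deriv_of_const J _ _ _ _ 1 v J_open l_unit Hv
                          (L_deriv 0 v Hv) (L_deriv 0 v Hv)).
  rewrite (ip_sym (L 1 v)) in H. lra.
Qed.

Lemma TE_perp v : J v -> ip (L 1 v) E0 = 0.
Proof.
  intro Hv. pose proof (ip_deriv_of_const J _ _ _ _ 0 v J_open l_perp Hv
                          (L_deriv 0 v Hv) (vderiv_const E0 v)).
  rewrite ip_zeror in H. lra.
Qed.

Lemma frame_gram v : J v -> frame_relations (L 0 v) (L 1 v) (L 2 v) E0.
Proof.
  intro Hv. split; auto using lT_perp, TE_perp.
  - pose proof (ip_deriv_of_const J _ _ _ _ 0 v J_open lT_perp Hv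
                  (L_deriv 0 v Hv) (L_deriv 1 v Hv)).
    rewrite T_unit in H by exact Hv. lra.
  - pose proof (ip_deriv_of_const J _ _ _ _ 1 v J_open T_unit Hv
                  (L_deriv 1 v Hv) (L_deriv 1 v Hv)).
    rewrite (ip_sym (L 2 v)) in H. lra.
  - pose proof (ip_deriv_of_const J _ _ _ _ 0 v J_open TE_perp Hv
                  (L_deriv 1 v Hv) (vderiv_const E0 v)).
    rewrite ip_zeror in H. lra.
Qed.

End CurveFrame.

(** * The generic meridian surface  z(u,v) = u l(v) + g(u) E0 *)

Section MeridianSurface.
(* [dg n] is the n-th derivative of the profile g = dg 0 on I; [L n] the
   n-th derivative of the curve l = L 0 on J; <E0,E0> = s with s^2 = 1. *)
Variables (I J : R -> Prop) (dg : nat -> R -> R) (L : nat -> R -> V4)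
          (E0 : V4) (s : R).
Hypothesis I_open : open_set I.
Hypothesis J_open : open_set J.
Hypothesis I_pos : forall t, I t -> 0 < t.
Hypothesis dg_deriv : forall n t, I t -> derivable_pt_lim (dg n) t (dg (S n) t).
Hypothesis L_deriv : forall n v, J v -> vderiv (L n) v (L (S n) v).
Hypothesis frame : forall v, J v -> frame_relations (L 0 v) (L 1 v) (L 2 v) E0.
Hypothesis E0_norm : ip E0 E0 = s.
Hypothesis s_sign : s * s = 1.

Definition surf (u v : R) : V4 := vadd (vscal u (L 0 v)) (vscal (dg 0 u) E0).

Lemma surf_zu t v : I t -> zu surf t v = vadd (L 0 v) (vscal (dg 1 t) E0).
Proof.
  intro Ht. apply dvec_eq. eapply vderiv_ext.
  - apply vderiv_add.
    + apply (vderiv_scal (fun t => t)); [apply derivable_pt_lim_id | apply vderiv_const].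
    + apply vderiv_scal; [apply dg_deriv; auto | apply vderiv_const].
  - vext; ring.
Qed.

Lemma surf_zv t v : J v -> zv surf t v = vscal t (L 1 v).
Proof.
  intro Hv. apply dvec_eq. eapply vderiv_ext.
  - apply vderiv_add.
    + apply (vderiv_scal (fun _ => t)); [apply derivable_pt_lim_const | auto].
    + apply (vderiv_scal (fun _ => dg 0 t));
        [apply derivable_pt_lim_const | apply vderiv_const].
  - vext; ring.
Qed.

Lemma surf_zuu t v : I t -> zuu surf t v = vscal (dg 2 t) E0.
Proof.
  intro Ht. destruct (I_open t Ht) as [eps [Heps Hball]].
  apply (dvec_local _ (fun t => vadd (L 0 v) (vscal (dg 1 t) E0)) t _ eps Heps).
  - intros; apply surf_zu; auto.
  - eapply vderiv_ext.
    + apply vderiv_add; [apply vderiv_const |].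
      apply vderiv_scal; [apply dg_deriv; auto | apply vderiv_const].
    + vext; ring.
Qed.

Lemma surf_zuv t v : I t -> J v -> zuv surf t v = L 1 v.
Proof.
  intros Ht Hv. destruct (J_open v Hv) as [eps [Heps Hball]].
  apply (dvec_local _ (fun v => vadd (L 0 v) (vscal (dg 1 t) E0)) v _ eps Heps).
  - intros; apply surf_zu; auto.
  - eapply vderiv_ext.
    + apply vderiv_add; [auto |].
      apply (vderiv_scal (fun _ => dg 1 t));
        [apply derivable_pt_lim_const | apply vderiv_const].
    + vext; ring.
Qed.

Lemma surf_zvv t v : J v -> zvv surf t v = vscal t (L 2 v).
Proof.
  intros Hv. destruct (J_open v Hv) as [eps [Heps Hball]].
  apply (dvec_local _ (fun v => vscal t (L 1 v)) v _ eps Heps).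
  - intros; apply surf_zv; auto.
  - eapply vderiv_ext.
    + apply (vderiv_scal (fun _ => t)); [apply derivable_pt_lim_const | auto].
    + vext; ring.
Qed.

Definition metric_E (t : R) : R := 1 + s * dg 1 t ^ 2.

Lemma surf_cE t v : I t -> J v -> cE surf t v = metric_E t.
Proof.
  intros Ht Hv. frame_facts (frame v Hv).
  unfold cE, metric_E; rewrite surf_zu by auto. simpl_ip. ring.
Qed.

Lemma surf_cF t v : I t -> J v -> cF surf t v = 0.
Proof.
  intros Ht Hv. frame_facts (frame v Hv).
  unfold cF; rewrite surf_zu, surf_zv by auto. simpl_ip. ring.
Qed.

Lemma surf_cG t v : I t -> J v -> cG surf t v = t ^ 2.
Proof.
  intros Ht Hv. frame_facts (frame v Hv).
  unfold cG; rewrite surf_zv by auto. simpl_ip. ring.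
Qed.

Section Spacelike.
Hypothesis E_pos : forall t, I t -> 0 < metric_E t.

Definition coef_l (t : R) : R :=
  (t - t ^ 2 * dg 2 t * s * dg 1 t / metric_E t) / (2 * t ^ 2 * metric_E t).
Definition coef_n (t : R) : R := 1 / (2 * t).
Definition coef_e (t : R) : R :=
  (t ^ 2 * dg 2 t / metric_E t + t * dg 1 t) / (2 * t ^ 2 * metric_E t).

Definition mean_curv (t v : R) : V4 :=
  vadd (vscal (coef_l t) (L 0 v))
       (vadd (vscal (coef_n t) (L 2 v)) (vscal (coef_e t) E0)).

Lemma surf_Hvec t v : I t -> J v -> Hvec surf t v = mean_curv t v.
Proof.
  intros Ht Hv. frame_facts (frame v Hv).
  assert (0 < t) by auto. assert (0 < metric_E t) by auto.
  unfold Hvec, h11, h12, h22, nrm, tang, cW.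
  rewrite surf_cE, surf_cF, surf_cG by auto.
  rewrite surf_zuu, surf_zuv, surf_zvv, surf_zu, surf_zv by auto.
  simpl_ip. unfold mean_curv, coef_l, coef_n, coef_e, metric_E in *.
  vext; field; lra.
Qed.

(* H is normal: <H, z_u> = 0 expresses coef_l - coef_n through coef_e. *)
Lemma coef_normality t : I t -> coef_l t - coef_n t = - s * dg 1 t * coef_e t.
Proof.
  intro Ht. assert (0 < t) by auto. assert (0 < metric_E t) by auto.
  unfold coef_l, coef_n, coef_e, metric_E in *. field. lra.
Qed.

Lemma ex_derive_dg n t : I t -> ex_derive (dg n) t.
Proof. intro Ht. exists (dg (S n) t). apply is_derive_Reals. auto. Qed.

Lemma coef_l_derivable t : I t -> exists a, derivable_pt_lim coef_l t a.
Proof.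
  intro Ht. assert (0 < t) by auto. assert (0 < metric_E t) by auto.
  assert (Hd : ex_derive coef_l t).
  { unfold coef_l, metric_E in *. auto_derive.
    repeat split; try apply ex_derive_dg; auto.
    all: try (intro; nra); try exact I; apply Rgt_not_eq, Rmult_lt_0_compat; nra. }
  destruct Hd as [a Ha]. exists a. apply is_derive_Reals; auto.
Qed.

Lemma coef_e_derivable t : I t -> exists a, derivable_pt_lim coef_e t a.
Proof.
  intro Ht. assert (0 < t) by auto. assert (0 < metric_E t) by auto.
  assert (Hd : ex_derive coef_e t).
  { unfold coef_e, metric_E in *. auto_derive.
    repeat split; try apply ex_derive_dg; auto.
    all: try (intro; nra); try exact I; apply Rgt_not_eq, Rmult_lt_0_compat; nra. }
  destruct Hd as [a Ha]. exists a. apply is_derive_Reals; auto.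
Qed.

Lemma coef_n_deriv t : I t -> derivable_pt_lim coef_n t (-1 / (2 * t ^ 2)).
Proof.
  intro Ht. assert (0 < t) by auto. apply is_derive_Reals. unfold coef_n.
  auto_derive; [lra | field; lra].
Qed.

Lemma surf_dH_du u v : I u -> J v -> exists a c,
  dvec (fun t => Hvec surf t v) u =
  vadd (vscal a (L 0 v)) (vadd (vscal (-1 / (2 * u ^ 2)) (L 2 v)) (vscal c E0)).
Proof.
  intros Hu Hv.
  destruct (coef_l_derivable u Hu) as [a Ha].
  destruct (coef_e_derivable u Hu) as [c Hc].
  exists a, c. destruct (I_open u Hu) as [eps [Heps Hball]].
  apply (dvec_local _ (fun t => mean_curv t v) u _ eps Heps).
  - intros; apply surf_Hvec; auto.
  - eapply vderiv_ext.
    + unfold mean_curv.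
      apply vderiv_add; [apply vderiv_scal; [exact Ha | apply vderiv_const] |].
      apply vderiv_add;
        [apply vderiv_scal; [apply coef_n_deriv; auto | apply vderiv_const] |].
      apply vderiv_scal; [exact Hc | apply vderiv_const].
    + vext; ring.
Qed.

Lemma DuH_zero_curvature u v : I u -> J v -> DuH surf u v = vzero ->
  L 2 v = vscal (-1) (L 0 v).
Proof.
  intros Hu Hv HDu. assert (0 < u) by auto.
  destruct (surf_dH_du u v Hu Hv) as [a [c Hdh]].
  unfold DuH in HDu. rewrite Hdh in HDu.
  apply nrm_zero_tangent in HDu. destruct HDu as [al [be HDu]].
  rewrite surf_zu, surf_zv in HDu by auto.
  set (bn := -1 / (2 * u ^ 2)) in *.
  assert (Hbn : bn <> 0).
  { unfold bn. intro Hz. assert (-1 = 0 * (2 * u ^ 2)) by (rewrite <- Hz; field; lra).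
    lra. }
  frame_facts (frame v Hv).
  pose proof (f_equal (fun w => ip w E0) HDu) as qE.
  pose proof (f_equal (fun w => ip w (L 0 v)) HDu) as ql.
  pose proof (f_equal (fun w => ip w (L 1 v)) HDu) as qT.
  simpl in qE, ql, qT. revert qE ql qT. simpl_ip. intros qE ql qT.
  assert (Hbe : be = 0) by nra.
  assert (Hc' : c = al * dg 1 u).
  { assert (Hcs : c * s = al * dg 1 u * s) by nra.
    transitivity (c * s * s); [rewrite Rmult_assoc, s_sign; ring |].
    rewrite Hcs, Rmult_assoc, s_sign; ring. }
  assert (Ha' : a = al + bn) by nra.
  pose proof (f_equal vc1 HDu) as c1; pose proof (f_equal vc2 HDu) as c2;
  pose proof (f_equal vc3 HDu) as c3; pose proof (f_equal vc4 HDu) as c4.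
  simpl in c1, c2, c3, c4. rewrite Hbe, Hc', Ha' in *.
  vext; (apply (Rmult_eq_reg_l bn); [nra | exact Hbn]).
Qed.

Lemma null_H_vanishes u v : I u -> J v -> L 2 v = vscal (-1) (L 0 v) ->
  ip (Hvec surf u v) (Hvec surf u v) = 0 -> Hvec surf u v = vzero.
Proof.
  intros Hu Hv HN Hnull. assert (0 < metric_E u) by auto.
  rewrite surf_Hvec in * by auto. unfold mean_curv in *. rewrite HN in *.
  frame_facts (frame v Hv). revert Hnull. simpl_ip. intro Hnull.
  pose proof (coef_normality u Hu) as Hrel.
  assert (He : coef_e u = 0).
  { assert (Hq : coef_e u * coef_e u * (s * metric_E u) = 0).
    { unfold metric_E in *.
      replace (coef_l u) with (coef_n u - s * dg 1 u * coef_e u) in Hnull by lra.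
      rewrite <- Hnull. ring. }
    apply Rmult_integral in Hq. destruct Hq as [Hq | Hq].
    - apply Rmult_integral in Hq; tauto.
    - apply Rmult_integral in Hq. destruct Hq as [Hq | Hq];
        [rewrite Hq in s_sign; lra | lra]. }
  replace (coef_l u) with (coef_n u) by (rewrite He in Hrel; lra).
  rewrite He. vext; ring.
Qed.

End Spacelike.

Theorem meridian_not_parallel : (exists u v, I u /\ J v) ->
  marginally_trapped surf (fun u v => I u /\ J v) ->
  ~ parallel_H surf (fun u v => I u /\ J v).
Proof.
  intros [u [v [Hu Hv]]] [Hsp HMT] Hpar.
  assert (E_pos : forall t, I t -> 0 < metric_E t).
  { intros t Ht. rewrite <- (surf_cE t v Ht Hv). apply (Hsp t v); auto. }
  destruct (HMT u v (conj Hu Hv)) as [Hne Hnull].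
  destruct (Hpar u v (conj Hu Hv)) as [HDu _].
  apply Hne, null_H_vanishes; auto.
  apply (DuH_zero_curvature E_pos u v); auto.
Qed.

End MeridianSurface.

(* The hypotheses of the theorem, for a general E0 with <E0,E0> = s = +-1,
   supply derivative towers of g and l and hence the generic setting. *)
Lemma meridian_over_curve_not_parallel (I J : R -> Prop) (l : R -> V4)
      (g : R -> R) (E0 : V4) (s : R) :
  is_open_interval I -> (forall u, I u -> 0 < u) -> is_open_interval J ->
  smooth_curve_on J l -> smooth_on I g ->
  (forall v, J v -> ip (l v) E0 = 0 /\ ip (l v) (l v) = 1 /\
                    ip (dvec l v) (dvec l v) = 1) ->
  ip E0 E0 = s -> s * s = 1 ->
  marginally_trapped (fun u v => vadd (vscal u (l v)) (vscal (g u) E0))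
                     (fun u v => I u /\ J v) ->
  ~ parallel_H (fun u v => vadd (vscal u (l v)) (vscal (g u) E0))
               (fun u v => I u /\ J v).
Proof.
  intros [[u0 Hu0] [_ HI]] Hpos [[v0 Hv0] [_ HJ]]
    [[a [a0 Ha]] [[b [b0 Hb]] [[c [c0 Hc]] [e [e0 He]]]]] [dg [dg0 Hdg]]
    Hl HEE Hs.
  set (L n v := mkV (a n v) (b n v) (c n v) (e n v)).
  assert (HL : forall n v, J v -> vderiv (L n) v (L (S n) v)).
  { intros n v Hv; repeat split; simpl; auto. }
  replace l with (L 0%nat) in *
    by (apply functional_extensionality; intro v; apply V4_ext; simpl; auto).
  replace g with (dg 0%nat) in * by (apply functional_extensionality; auto).
  assert (Hframe : forall v, J v -> frame_relations (L 0%nat v) (L 1%nat v) (L 2%nat v) E0).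
  { apply frame_gram; auto; intros v Hv; try apply Hl; auto.
    rewrite <- (dvec_eq _ _ _ (HL 0%nat v Hv)). apply Hl; auto. }
  exact (meridian_not_parallel I J dg L E0 s HI HJ Hpos Hdg HL Hframe HEE Hs
           (ex_intro _ u0 (ex_intro _ v0 (conj Hu0 Hv0)))).
Qed.

Theorem mainTheorem12 :
  (forall (I J : R -> Prop) (l : R -> V4) (g : R -> R),
      is_open_interval I -> (forall u, I u -> 0 < u) -> is_open_interval J ->
      smooth_curve_on J l -> smooth_on I g ->
      (forall v, J v -> vc4 (l v) = 0 /\ ip (l v) (l v) = 1 /\
                        ip (dvec l v) (dvec l v) = 1) ->
      (forall u, I u -> Rabs (deriv g u) < 1) ->
      marginally_trapped (meridian1 l g) (fun u v => I u /\ J v) ->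
      ~ parallel_H (meridian1 l g) (fun u v => I u /\ J v))
  /\
  (forall (I J : R -> Prop) (l : R -> V4) (g : R -> R),
      is_open_interval I -> (forall u, I u -> 0 < u) -> is_open_interval J ->
      smooth_curve_on J l -> smooth_on I g ->
      (forall v, J v -> vc1 (l v) = 0 /\ ip (l v) (l v) = 1 /\
                        ip (dvec l v) (dvec l v) = 1) ->
      marginally_trapped (meridian2 l g) (fun u v => I u /\ J v) ->
      ~ parallel_H (meridian2 l g) (fun u v => I u /\ J v)).
Proof.
  split.
  - (* M'_m: rotation about the timelike axis, E0 = e4 with <e4,e4> = -1. *)
    intros I J l g HI Hp HJ Hl Hg Hc _.
    apply (meridian_over_curve_not_parallel I J l g e4 (-1)); auto.
    + intros v Hv. destruct (Hc v Hv) as [h1 [h2 h3]]. repeat split; auto.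
      unfold ip; simpl; rewrite h1; ring.
    + unfold ip; simpl; ring.
    + ring.
  - (* M''_m: rotation about the spacelike axis, E0 = e1 with <e1,e1> = 1. *)
    intros I J l g HI Hp HJ Hl Hg Hc.
    apply (meridian_over_curve_not_parallel I J l g e1 1); auto.
    + intros v Hv. destruct (Hc v Hv) as [h1 [h2 h3]]. repeat split; auto.
      unfold ip; simpl; rewrite h1; ring.
    + unfold ip; simpl; ring.
    + ring.
Qed.
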